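(* Let $\theta,\kappa\in\mathbb{F}_{q^3}^*$ with $N(\theta)\neq N(\kappa)$. For any point $P\in\Pi_\kappa$, the projection of $\Pi_\theta$ from $P$ onto $m_T$, i.e. the set $\{PQ\cap m_T: Q\in\Pi_\theta\}$, equals $\mathcal S_{-\kappa\theta}$.
   Context: Let $q$ be a prime power, $\mathbb{F}_{q^3}^*=\mathbb{F}_{q^3}\setminus\{0\}$, $N(x)=x^{q^2+q+1}$. Points of $\mathrm{PG}(2,q^3)$ have homogeneous coordinates $(x,y,z)$ and lines $[a,b,c]$. Let $m_T$ be the line $[0,0,1]$. For $\theta\in\mathbb{F}_{q^3}^*$ let $\mathcal S_\theta=\{(x\theta,x^q,0):x\in\mathbb{F}_{q^3}^*\}$ and $\Pi_\theta=\{(r\theta^{q+1},r^q,r^{q^2}\theta):r\in\mathbb{F}_{q^3}^*\}$. *)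

From mathcomp Require Import all_boot all_algebra all_field.
Set Implicit Arguments. Unset Strict Implicit. Unset Printing Implicit Defensive.
Import GRing.Theory.
Local Open Scope ring_scope.

Definition prime_power (q : nat) : Prop :=
  exists p k : nat, prime p /\ (0 < k)%N /\ q = (p ^ k)%N.

(* Homogeneous coordinates (x,y,z) of PG(2,F); points are nonzero triples
   up to a nonzero scalar. *)
Definition pt (F : fieldType) := (F * F * F)%type.

Definition is_point (F : fieldType) (u : pt F) : Prop := u != (0, 0, 0).

Definition scale3 (F : fieldType) (c : F) (u : pt F) : pt F :=
  let: (x, y, z) := u in (c * x, c * y, c * z).

Definition proj_eq (F : fieldType) (u v : pt F) : Prop :=
  exists c : F, c != 0 /\ u = scale3 c v.

Definition on_line (F : fieldType) (l u : pt F) : Prop :=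
  let: (a, b, c) := l in let: (x, y, z) := u in a * x + b * y + c * z = 0.

Definition mT (F : fieldType) : pt F := (0, 0, 1).

Definition det3 (F : fieldType) (u v w : pt F) : F :=
  let: (x1, y1, z1) := u in let: (x2, y2, z2) := v in let: (x3, y3, z3) := w in
  x1 * (y2 * z3 - z2 * y3) - y1 * (x2 * z3 - z2 * x3) + z1 * (x2 * y3 - y2 * x3).

Definition collinear (F : fieldType) (u v w : pt F) : Prop := det3 u v w = 0.

Definition Nrm (F : fieldType) (q : nat) (x : F) : F := x ^+ (q ^ 2 + q + 1).

Definition S_set (F : fieldType) (q : nat) (theta : F) (X : pt F) : Prop :=
  exists x : F, x != 0 /\ proj_eq X (x * theta, x ^+ q, 0).

Definition Pi_set (F : fieldType) (q : nat) (theta : F) (X : pt F) : Prop :=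
  exists r : F, r != 0 /\
    proj_eq X (r * theta ^+ (q + 1), r ^+ q, r ^+ (q ^ 2) * theta).

Definition proj_from (F : fieldType) (P : pt F) (A : pt F -> Prop) (X : pt F)
  : Prop :=
  is_point X /\ on_line (mT F) X /\
  exists Q : pt F, A Q /\ ~ proj_eq Q P /\ collinear P Q X.

From mathcomp Require Import all_boot all_algebra all_field.
From mathcomp Require Import ring zify.
Set Implicit Arguments. Unset Strict Implicit. Unset Printing Implicit Defensive.
Import GRing.Theory.
Local Open Scope ring_scope.

(* Write P = Pi_kappa(s), Q = Pi_theta(r) and
   L(r) = theta r^(q^2) s^q - kappa s^(q^2) r^q.  Expanding the determinant,
   a point (x1, x2, 0) of m_T lies on PQ iff x1 L(r) + x2 kappa theta L(r)^q = 0,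
   i.e. iff it is the point (y (-kappa theta), y^q, 0) of S_(-kappa theta) with
   y = L(r)^-1.  The map L is additive, and applying the norm to L(r) = 0 gives
   N(theta) = N(kappa) unless r = 0; so L is a bijection of F_(q^3), which shows
   at once that Pi_theta and Pi_kappa are disjoint and that every y is reached. *)

Section ProjectivePoints.
Variable F : fieldType.

Lemma scale3A (a b : F) (u : pt F) : scale3 a (scale3 b u) = scale3 (a * b) u.
Proof. by case: u => [[x y] z]; rewrite /scale3 !mulrA. Qed.

Lemma scale31 (u : pt F) : scale3 1 u = u.
Proof. by case: u => [[x y] z]; rewrite /scale3 !mul1r. Qed.

Lemma proj_eq_refl (u : pt F) : proj_eq u u.
Proof. by exists 1; rewrite oner_eq0 scale31. Qed.

Lemma proj_eq_sym (u v : pt F) : proj_eq u v -> proj_eq v u.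
Proof.
case=> c [c0 ->]; exists c^-1; split; first by rewrite invr_eq0.
by rewrite scale3A mulVf // scale31.
Qed.

Lemma proj_eq_trans (u v w : pt F) : proj_eq u v -> proj_eq v w -> proj_eq u w.
Proof.
case=> c [c0 ->] [d [d0 ->]]; exists (c * d).
by rewrite mulf_neq0 // scale3A.
Qed.

Lemma proj_eq_is_point (u v : pt F) : proj_eq u v -> is_point v -> is_point u.
Proof.
case: v => [[x y] z] [c [c0 ->]]; apply: contra_neq; rewrite /scale3.
by case=> /eqP + /eqP + /eqP; rewrite !mulf_eq0 (negbTE c0) /= => /eqP-> /eqP-> /eqP->.
Qed.

Lemma on_mT (x1 x2 x3 : F) : on_line (mT F) (x1, x2, x3) <-> x3 = 0.
Proof. by rewrite /on_line /= !mul0r mul1r !add0r. Qed.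

Lemma det3_scale (c d : F) (u v w : pt F) :
  det3 (scale3 c u) (scale3 d v) w = c * d * det3 u v w.
Proof.
by case: u v w => [[? ?] ?] [[? ?] ?] [[? ?] ?]; rewrite /det3 /scale3; ring.
Qed.

Lemma mT_point_on_line (q : nat) (a B x1 x2 : F) :
  B != 0 -> is_point (x1, x2, 0) ->
  x1 * B + x2 * a * B ^+ q = 0 <->
  proj_eq (x1, x2, 0) (B^-1 * - a, B^-1 ^+ q, 0).
Proof.
move=> B0 X0; split=> [eqX | [e [_ [-> -> _]]]]; last first.
  rewrite exprVn; move: (B ^+ q) (expf_neq0 q B0) => b b0; field; exact/andP.
have x2_0 : x2 != 0.
  apply: contraNneq X0 => x2_0; move: eqX; rewrite x2_0 !mul0r addr0.
  by move/eqP; rewrite mulf_eq0 (negbTE B0) orbF => /eqP ->.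
exists (x2 * B ^+ q); split; first by rewrite mulf_neq0 ?expf_neq0.
have -> : x1 = - (x2 * a * B ^+ q) / B.
  by apply: (mulIf B0); rewrite divfK //; apply/eqP; rewrite -addr_eq0 eqX.
rewrite /scale3 exprVn mulr0; move: (B ^+ q) (expf_neq0 q B0) => b b0.
by congr (_, _, _); field.
Qed.

End ProjectivePoints.

Lemma exprBn_pchar (R : comNzRingType) n (x y : R) :
  [pchar R].-nat n -> (x - y) ^+ n = x ^+ n - y ^+ n.
Proof. by move=> charn; rewrite exprDn_pchar // exprNn_pchar. Qed.

Lemma pchar_nat_card (F : finFieldType) q n :
  prime_power q -> #|F| = (q ^ n)%N -> [pchar F].-nat q.
Proof.
case=> p [k [p_pr [k0 ->]]] cardF.
have pF : p \in [pchar F] by apply: (card_finPcharP (n := (k * n)%N)); rewrite // expnM.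
by rewrite (eq_pnat _ (pcharf_eq pF)) pnatX pnat_id.
Qed.

Section NormAndPiMinor.
Variables (F : fieldType) (q : nat).
Hypothesis pchar_q : [pchar F].-nat q.
Hypothesis frob_cube : forall x : F, x ^+ (q ^ 3) = x.

Lemma NrmM (x y : F) : Nrm q (x * y) = Nrm q x * Nrm q y.
Proof. exact: exprMn. Qed.

Lemma Nrm_eq0 (x : F) : (Nrm q x == 0) = (x == 0).
Proof. by rewrite /Nrm expf_eq0 addn1. Qed.

Lemma Nrm_frob (x : F) : Nrm q (x ^+ q) = Nrm q x.
Proof.
rewrite /Nrm -exprM.
have -> : (q * (q ^ 2 + q + 1) = q ^ 3 + (q ^ 2 + q))%N.
  by rewrite !expnS expn0 !muln1; lia.
by rewrite exprD frob_cube -exprS addn1.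
Qed.

Lemma Nrm_frob2 (x : F) : Nrm q (x ^+ (q ^ 2)) = Nrm q x.
Proof. by rewrite -mulnn exprM !Nrm_frob. Qed.

Lemma frob2_frob (x : F) : x ^+ (q ^ 2) ^+ q = x.
Proof. by rewrite -exprM -expnSr frob_cube. Qed.

Definition Pi_point (t r : F) : pt F := (r * t ^+ (q + 1), r ^+ q, r ^+ (q ^ 2) * t).

(* Up to sign, the minor on the last two coordinates of Pi_t(r) and Pi_k(s). *)
Definition Pi_minor (t k s r : F) : F :=
  t * r ^+ (q ^ 2) * s ^+ q - k * s ^+ (q ^ 2) * r ^+ q.

Lemma Pi_minorB (t k s : F) : {morph Pi_minor t k s : a b / a - b}.
Proof.
have pchar_q2 : [pchar F].-nat (q ^ 2)%N by rewrite pnatX pchar_q.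
by move=> a b; rewrite /Pi_minor !exprBn_pchar //; ring.
Qed.

Lemma Pi_minor_frob (t k s r : F) :
  Pi_minor t k s r ^+ q = t ^+ q * r * s ^+ (q ^ 2) - k ^+ q * s * r ^+ (q ^ 2).
Proof.
by rewrite exprBn_pchar // !exprMn !frob2_frob -!exprM mulnn.
Qed.

Lemma det3_Pi_mT (t k s r x1 x2 : F) :
  det3 (Pi_point k s) (Pi_point t r) (x1, x2, 0) =
  x1 * Pi_minor t k s r + x2 * (k * t) * Pi_minor t k s r ^+ q.
Proof. by rewrite Pi_minor_frob /det3 /Pi_point /Pi_minor addn1 !exprS; ring. Qed.

Lemma collinear_Pi_mT (c d : F) : c != 0 -> d != 0 -> forall t k s r x1 x2 : F,
  collinear (scale3 c (Pi_point k s)) (scale3 d (Pi_point t r)) (x1, x2, 0) <->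
  x1 * Pi_minor t k s r + x2 * (k * t) * Pi_minor t k s r ^+ q = 0.
Proof.
move=> c0 d0 t k s r x1 x2; rewrite /collinear det3_scale det3_Pi_mT.
by split=> [/eqP | ->]; rewrite ?mulr0 // mulf_eq0 (negbTE (mulf_neq0 c0 d0)) => /eqP.
Qed.

Lemma Pi_set_proj_eq (t : F) (X Y : pt F) :
  proj_eq X Y -> Pi_set q t Y -> Pi_set q t X.
Proof. by move=> XY [r [r0 Yr]]; exists r; split; last exact: proj_eq_trans XY Yr. Qed.

Lemma Pi_set_Pi_point (t r : F) : r != 0 -> Pi_set q t (Pi_point t r).
Proof. by move=> r0; exists r; split; last exact: proj_eq_refl. Qed.

Section DistinctNorms.
Variables theta kappa : F.
Hypothesis Nrm_neq : Nrm q theta != Nrm q kappa.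

Lemma Pi_minor_eq0 (s r : F) : s != 0 -> (Pi_minor theta kappa s r == 0) = (r == 0).
Proof.
move=> s0; have [-> | r0] := eqVneq r 0.
  have q_gt0 : (0 < q)%N by case/andP: pchar_q.
  by rewrite /Pi_minor !expr0n expn_eq0 (gtn_eqF q_gt0) /= !mulr0 !mul0r subrr eqxx.
apply/negbTE; rewrite /Pi_minor subr_eq0; apply: contra Nrm_neq => /eqP/(congr1 (Nrm q)).
rewrite !NrmM Nrm_frob Nrm_frob2 Nrm_frob Nrm_frob2 => eqN; apply/eqP.
have NsNr : Nrm q s * Nrm q r != 0 by rewrite mulf_neq0 // Nrm_eq0.
apply: (mulIf NsNr); transitivity (Nrm q theta * Nrm q r * Nrm q s); first ring.
by rewrite eqN; ring.
Qed.

Lemma Pi_minor_inj (s : F) : s != 0 -> injective (Pi_minor theta kappa s).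
Proof.
move=> s0 a b eq_ab; apply/eqP; rewrite -subr_eq0 -(Pi_minor_eq0 _ s0).
by rewrite Pi_minorB eq_ab subrr.
Qed.

Lemma Pi_set_disjoint (X : pt F) : Pi_set q theta X -> ~ Pi_set q kappa X.
Proof.
case=> r [r0 Xr] [s [s0 Xs]].
have [c [_ [_ eq2 eq3]]] := proj_eq_trans (proj_eq_sym Xr) Xs.
move/negP: r0; apply; rewrite -(Pi_minor_eq0 _ s0); apply/eqP.
transitivity (r ^+ (q ^ 2) * theta * s ^+ q - kappa * s ^+ (q ^ 2) * r ^+ q).
  by rewrite /Pi_minor; ring.
by rewrite eq2 eq3; ring.
Qed.

End DistinctNorms.
End NormAndPiMinor.

Section ProjectionOfPi.
Variables (F : finFieldType) (q : nat) (theta kappa s c : F).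
Hypotheses (pchar_q : [pchar F].-nat q) (frob_cube : forall x : F, x ^+ (q ^ 3) = x).
Hypotheses (Nrm_neq : Nrm q theta != Nrm q kappa) (s0 : s != 0) (c0 : c != 0).

Let L := Pi_minor q theta kappa s.
Let L_eq0 r : (L r == 0) = (r == 0) := Pi_minor_eq0 pchar_q frob_cube Nrm_neq r s0.

Lemma proj_from_Pi_sub_S (X : pt F) :
  proj_from (scale3 c (Pi_point q kappa s)) (Pi_set q theta) X ->
  S_set q (- (kappa * theta)) X.
Proof.
case: X => [[x1 x2] x3] [X0 [/on_mT x3_0 [Q [[r [r0 [d [d0 ->]]]] [_]]]]].
subst x3; move/(collinear_Pi_mT pchar_q frob_cube c0 d0) => lineX.
have Lr0 : L r != 0 by rewrite L_eq0.
exists (L r)^-1; split; first by rewrite invr_eq0.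
exact/(mT_point_on_line q (kappa * theta) Lr0 X0).
Qed.

Lemma S_sub_proj_from_Pi (X : pt F) :
  S_set q (- (kappa * theta)) X ->
  proj_from (scale3 c (Pi_point q kappa s)) (Pi_set q theta) X.
Proof.
case=> y [y0 Xy].
have [g _ gK] := injF_bij (Pi_minor_inj pchar_q frob_cube Nrm_neq s0).
set r := g y^-1; have Lr : L r = y^-1 := gK _.
have Lr0 : L r != 0 by rewrite Lr invr_eq0.
have r0 : r != 0 by rewrite -L_eq0.
have [x1 [x2 defX]] : exists x1 x2, X = (x1, x2, 0).
  case: Xy => e [_ ->]; exists (e * (y * - (kappa * theta))), (e * y ^+ q).
  by rewrite /scale3 mulr0.
rewrite {}defX in Xy *; rewrite -[y]invrK -Lr in Xy.
have X0 : is_point (x1, x2, 0).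
  apply: (proj_eq_is_point Xy); apply/eqP; case=> _ /eqP.
  by rewrite expf_eq0 invr_eq0 (negbTE Lr0) andbF.
do 2![split=> //]; first exact/on_mT.
exists (Pi_point q theta r); split; first exact: Pi_set_Pi_point.
split.
  move=> /Pi_set_proj_eq QP; apply: (Pi_set_disjoint pchar_q frob_cube Nrm_neq).
    exact: Pi_set_Pi_point r0.
  by apply: QP; exists s; split => //; exists c.
rewrite -[Pi_point q theta r]scale31.
apply/(collinear_Pi_mT pchar_q frob_cube c0 (oner_neq0 F)).
exact/(mT_point_on_line q (kappa * theta) Lr0 X0).
Qed.

End ProjectionOfPi.

Theorem lemma7p2 (F : finFieldType) (q : nat) (hq : prime_power q)
  (hF : #|F| = (q ^ 3)%N) (theta kappa : F) :
  theta != 0 -> kappa != 0 -> Nrm q theta != Nrm q kappa ->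
  forall P : pt F, Pi_set q kappa P ->
  forall X : pt F, proj_from P (Pi_set q theta) X <-> S_set q (- (kappa * theta)) X.
Proof.
move=> _ _ Nrm_neq P [s [s0 [c [c0 ->]]]] X.
have pchar_q := pchar_nat_card hq hF.
have frob_cube (x : F) : x ^+ (q ^ 3) = x by rewrite -hF expf_card.
by split; [apply: proj_from_Pi_sub_S | apply: S_sub_proj_from_Pi].
Qed.
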